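(* Let $G_0$ be a connected graph with a vertex $x$ such that $d_{G_0}(x)\in\{1,2\}$. Let $P_1=u_1u_2\cdots u_k$ ($k\ge1$) and $P_2=v_1v_2\cdots v_l$ ($l\ge1$) be paths, vertex-disjoint from each other and from $G_0$. Let $G_1$ be the graph obtained from the disjoint union of $G_0,P_1,P_2$ by adding the edges $u_1x$ and $v_1x$, and let $G_2=G_1-u_1x+u_1v_l$. Then $SO(G_1)>SO(G_2)$ and $SO_{red}(G_1)>SO_{red}(G_2)$.
   Context: $d_G(u)$ denotes the degree of $u$ in $G$. $SO(G)=\sum_{uv\in E(G)}\sqrt{d_G(u)^2+d_G(v)^2}$ and $SO_{red}(G)=\sum_{uv\in E(G)}\sqrt{(d_G(u)-1)^2+(d_G(v)-1)^2}$. *)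

From HB Require Import structures.
From mathcomp Require Import all_boot all_order all_algebra.
Set Implicit Arguments. Unset Strict Implicit. Unset Printing Implicit Defensive.
Import Order.TTheory GRing.Theory Num.Theory.
Local Open Scope ring_scope.

(* Simple graphs: a relation e : rel T on a finType T (assumed symmetric,
   irreflexive where needed). *)

Definition deg (T : finType) (e : rel T) (u : T) : nat := #|[pred v | e u v]|.

(* Sum over unordered edges = half the sum over ordered adjacent pairs. *)
Definition SO (R : rcfType) (T : finType) (e : rel T) : R :=
  (\sum_(u : T) \sum_(v : T | e u v)
      Num.sqrt ((deg e u)%:R ^+ 2 + (deg e v)%:R ^+ 2)) / 2%:R.

Definition SOred (R : rcfType) (T : finType) (e : rel T) : R :=
  (\sum_(u : T) \sum_(v : T | e u v)
      Num.sqrt (((deg e u)%:R - 1) ^+ 2 + ((deg e v)%:R - 1) ^+ 2)) / 2%:R.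

Definition path_adj (n : nat) (i j : 'I_n) : bool :=
  (i.+1 == j :> nat) || (j.+1 == i :> nat).

(* G1: vertices V + ('I_k + 'I_l); inl = G0, inr (inl i) = u_{i+1} of P1,
   inr (inr j) = v_{j+1} of P2; extra edges u_1 x and v_1 x. *)
Definition G1rel (V : finType) (e : rel V) (x : V) (k l : nat)
  : rel (V + ('I_k + 'I_l)) := fun a b =>
  match a, b with
  | inl a, inl b => e a b
  | inr (inl i), inr (inl j) => path_adj i j
  | inr (inr i), inr (inr j) => path_adj i j
  | inl a, inr (inl i) => (a == x) && (i == 0%N :> nat)
  | inr (inl i), inl a => (a == x) && (i == 0%N :> nat)
  | inl a, inr (inr j) => (a == x) && (j == 0%N :> nat)
  | inr (inr j), inl a => (a == x) && (j == 0%N :> nat)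
  | inr (inl _), inr (inr _) => false
  | inr (inr _), inr (inl _) => false
  end.

(* G2 = G1 - u_1 x + u_1 v_l *)
Definition G2rel (V : finType) (e : rel V) (x : V) (k l : nat)
  : rel (V + ('I_k + 'I_l)) := fun a b =>
  match a, b with
  | inl a, inl b => e a b
  | inr (inl i), inr (inl j) => path_adj i j
  | inr (inr i), inr (inr j) => path_adj i j
  | inl _, inr (inl _) => false
  | inr (inl _), inl _ => false
  | inl a, inr (inr j) => (a == x) && (j == 0%N :> nat)
  | inr (inr j), inl a => (a == x) && (j == 0%N :> nat)
  | inr (inl i), inr (inr j) => (i == 0%N :> nat) && (j == l.-1 :> nat)
  | inr (inr j), inr (inl i) => (i == 0%N :> nat) && (j == l.-1 :> nat)
  end.

From HB Require Import structures.
From mathcomp Require Import all_boot all_order all_algebra.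
From mathcomp Require Import ring lra zify.
Import Order.TTheory GRing.Theory Num.Theory.
Local Open Scope ring_scope.

(* Both indices are edge sums of a symmetric weight h(d(u), d(v)) that is
   nondecreasing in each degree.  Moving the edge u1 x to u1 vl only lowers the
   degree of x (from d+2 to d+1) and raises that of the pendant vertex vl (from
   1 to 2).  Hence no edge gains weight except the one at vl; together with the
   lost edge u1 x, the new edge u1 vl and the edge x v1 this gives an explicit
   lower bound for the loss.  For the two square-root weights the bound is positive:
   each case compares two sums of two square roots, done by squaring them. *)

Definition edge_sum {R : numDomainType} {T : finType} (h : nat -> nat -> R)
    (G : rel T) : R :=
  \sum_(u : T) \sum_(v : T | G u v) h (deg G u) (deg G v).

Definition edge_weight {R : numDomainType} {T : finType} (h : nat -> nat -> R)
    (G : rel T) (p : T * T) : R :=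
  if G p.1 p.2 then h (deg G p.1) (deg G p.2) else 0.

Lemma edge_sumE (R : numDomainType) (T : finType) (h : nat -> nat -> R) (G : rel T) :
  edge_sum h G = \sum_(p : T * T) edge_weight h G p.
Proof. by rewrite /edge_sum pair_big_dep big_mkcond. Qed.

Lemma ler_sum_fibers (R : numDomainType) (I : finType) (F : I -> R) (L : seq (I * R)) :
  (forall i, \sum_(t <- L | i == t.1) t.2 <= F i) -> \sum_(t <- L) t.2 <= \sum_i F i.
Proof.
move=> le_F; have -> : \sum_(t <- L) t.2 = \sum_i \sum_(t <- L | i == t.1) t.2.
  rewrite (eq_bigr _ (fun i _ => big_mkcond _ _)) exchange_big /=.
  by apply: eq_bigr => t _; rewrite -big_mkcond big_pred1_eq.
exact: ler_sum.
Qed.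

Lemma degE (T : finType) (G : rel T) (u : T) : deg G u = (\sum_v G u v)%N.
Proof. by rewrite /deg -sum1_card big_mkcond. Qed.

Lemma sum_eq_andb (T : finType) (a : T) (c : bool) : (\sum_b ((b == a) && c))%N = c.
Proof. by rewrite (bigD1 a) //= eqxx big1 ?addn0 // => b /negbTE ->. Qed.

Lemma sum_ord_andb_eq (n m : nat) (c : bool) :
  (\sum_(i < n) (c && (i == m :> nat)))%N = c && (m < n)%N.
Proof.
case: c => /=; last by rewrite big1.
case: (ltnP m n) => [lt_mn | le_nm].
  rewrite (bigD1 (Ordinal lt_mn)) //= eqxx big1 ?addn0 // => i.
  by rewrite -val_eqE => /negbTE ->.
by rewrite big1 // => i _; rewrite ltn_eqF // (leq_trans (ltn_ord i)).
Qed.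

Lemma sum_ord_eq_andb (n m : nat) (c : bool) :
  (\sum_(i < n) ((i == m :> nat) && c))%N = (m < n)%N && c.
Proof. by rewrite andbC -sum_ord_andb_eq; apply: eq_bigr => i _; rewrite andbC. Qed.

Lemma deg_path_adj (n : nat) (i : 'I_n) : deg (@path_adj n) i = ((i.+1 < n) + (0 < i))%N.
Proof.
rewrite degE /path_adj.
have -> : (\sum_(j < n) ((i.+1 == j :> nat) || (j.+1 == i :> nat)))%N =
    (\sum_(j < n) (true && (j == i.+1 :> nat))
     + \sum_(j < n) ((0 < i) && (j == i.-1 :> nat)))%N.
  by rewrite -big_split /=; apply: eq_bigr => j _; case: i => [[|i] ?] /=; lia.
by rewrite !sum_ord_andb_eq; case: i => [[|i] ?] /=; lia.
Qed.

(* The loss bound for x of degree d in G0, u1 of degree b and P2 with l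
   vertices, halved: the terms come from the edges x u1, u1 vl, x v1 and
   (if l > 1) vl v(l-1). *)
Definition move_gain {R : numDomainType} (h : nat -> nat -> R) (d b l : nat) : R :=
  h d.+2 b - h b 2%N + (h d.+2 (1 < l).+1 - h d.+1 2%N)
  + (if (1 < l)%N then h 1%N 2%N - h 2%N 2%N else 0).

(* The paths have k.+1 and l.+1 vertices, so that u1, v1 and vl are [ord0]
   and [ord_max]. *)
Section EdgeMove.
Variables (V : finType) (e : rel V) (x : V) (k l : nat).
Local Notation G1 := (@G1rel V e x k.+1 l.+1).
Local Notation G2 := (@G2rel V e x k.+1 l.+1).

Lemma degG1_G0 (a : V) : deg G1 (inl a) = (deg e a + 2 * (a == x))%N.
Proof. by rewrite degE !big_sumType /= -degE !sum_ord_andb_eq /= andbT; lia. Qed.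

Lemma degG2_G0 (a : V) : deg G2 (inl a) = (deg e a + (a == x))%N.
Proof. by rewrite degE !big_sumType /= -degE sum_ord_andb_eq big1_eq /= andbT; lia. Qed.

Lemma degG1_P1 (i : 'I_k.+1) : deg G1 (inr (inl i)) = (i.+1 < k.+1).+1.
Proof.
rewrite degE !big_sumType /= sum_eq_andb big1_eq -degE deg_path_adj.
by case: i => [[|i] ?] /=; lia.
Qed.

Lemma degG2_P1 (i : 'I_k.+1) : deg G2 (inr (inl i)) = (i.+1 < k.+1).+1.
Proof.
rewrite degE !big_sumType /= big1_eq -degE deg_path_adj sum_ord_andb_eq ltnSn andbT.
by case: i => [[|i] ?] /=; lia.
Qed.

Lemma degG1_P2 (j : 'I_l.+1) : deg G1 (inr (inr j)) = (j.+1 < l.+1).+1.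
Proof.
rewrite degE !big_sumType /= sum_eq_andb big1_eq -degE deg_path_adj.
by case: j => [[|j] ?] /=; lia.
Qed.

Lemma degG2_P2 (j : 'I_l.+1) : deg G2 (inr (inr j)) = 2%N.
Proof.
rewrite degE !big_sumType /= sum_eq_andb sum_ord_eq_andb -degE deg_path_adj.
by case: j => [[|j] ?] /=; lia.
Qed.

Variables (R : numDomainType) (h : nat -> nat -> R).
Hypothesis h_sym : forall a b, h a b = h b a.
Hypothesis h_mono : forall a a' b, (0 < a)%N -> (a <= a')%N -> h a b <= h a' b.

Local Notation T := (V + ('I_k.+1 + 'I_l.+1))%type.
Local Notation x' := (inl x : T).
Local Notation u1 := (inr (inl ord0) : T).
Local Notation v1 := (inr (inr ord0) : T).
Local Notation vl := (inr (inr ord_max) : T).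
Local Notation vl' := (inr (inr (inord l.-1)) : T).

(* When P2 is a single vertex, vl' = vl and the last two entries vanish. *)
Definition move_corrections : seq (T * T * R) :=
  let d := deg e x in let b := (0 < k).+1 in
  let c := if (0 < l)%N then h 1%N 2%N - h 2%N 2%N else 0 in
  [:: ((x', u1), h d.+2 b); ((u1, x'), h d.+2 b);
      ((u1, vl), - h b 2%N); ((vl, u1), - h b 2%N);
      ((x', v1), h d.+2 (0 < l).+1 - h d.+1 2%N); ((v1, x'), h d.+2 (0 < l).+1 - h d.+1 2%N);
      ((vl, vl'), c); ((vl', vl), c)].

Lemma sum_move_corrections :
  \sum_(t <- move_corrections) t.2 = 2%:R * move_gain h (deg e x) (0 < k).+1 l.+1.
Proof. by rewrite !big_cons big_nil /move_gain ltnS /=; ring. Qed.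

Lemma h_degG0_le (a : V) (n : nat) :
  h (deg e a + (a == x)) n <= h (deg e a + 2 * (a == x)) n.
Proof. by case: (a == x); [apply: h_mono; lia | rewrite !muln0]. Qed.

Lemma move_corrections_P2_le (i j : 'I_l.+1) :
  \sum_(t <- move_corrections | (inr (inr i), inr (inr j)) == t.1) t.2
    <= edge_weight h G1 (inr (inr i), inr (inr j)) - edge_weight h G2 (inr (inr i), inr (inr j)).
Proof.
rewrite big_mkcond /move_corrections !big_cons big_nil /edge_weight /= !xpair_eqE.
rewrite -?sum_eqE /= -?sum_eqE /= -!val_eqE /= (inordK (leq_pred l)) !degG1_P2 !degG2_P2.
rewrite !andbF /= !add0r addr0.
case: i j => [i lt_i] [j lt_j] /=; rewrite /path_adj /= !ltnS.
case: l lt_i lt_j => [|n] lt_i lt_j.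
  have -> : i = 0%N by lia.
  have -> : j = 0%N by lia.
  by rewrite /= !addr0 subrr.
rewrite /=; have [-> | ne_i] := eqVneq i n.+1.
  rewrite ltnn (gtn_eqF (ltnSn n)) /= addr0 eqSS (gtn_eqF lt_j) /=.
  by have [-> | _] := eqVneq j n; rewrite ?ltnSn ?subrr.
have [-> | ne_j] := eqVneq j n.+1.
  rewrite ltnn andbT /= add0r eqSS (gtn_eqF lt_i) orbF.
  by have [-> | _] := eqVneq i n; rewrite ?ltnSn ?subrr // h_sym.
have lt_in : (i < n.+1)%N by rewrite ltn_neqAle ne_i -ltnS.
have lt_jn : (j < n.+1)%N by rewrite ltn_neqAle ne_j -ltnS.
by rewrite /= lt_in lt_jn andbF add0r; case: ifP; rewrite subrr.
Qed.

Lemma move_corrections_le (p : T * T) :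
  \sum_(t <- move_corrections | p == t.1) t.2 <= edge_weight h G1 p - edge_weight h G2 p.
Proof.
case: p => [[a|[i|i]] [b|[j|j]]]; last exact: move_corrections_P2_le.
all: rewrite big_mkcond /move_corrections !big_cons big_nil /edge_weight /= !xpair_eqE.
all: rewrite -?sum_eqE /= -?sum_eqE /= -?val_eqE /= ?andbF ?andbT ?add0r ?addr0.
all: rewrite ?degG1_G0 ?degG2_G0 ?degG1_P1 ?degG2_P1 ?degG1_P2 ?degG2_P2 /=.
- case: ifP => _; rewrite ?subrr // subr_ge0.
  by apply: le_trans (h_degG0_le a _) _; rewrite h_sym [leRHS]h_sym h_degG0_le.
- by case: ifP => [/andP[/eqP-> /eqP->]|_]; rewrite ?eqxx ?muln1 ?addn2 subr0.
- by case: ifP => [/andP[/eqP-> /eqP->]|_]; rewrite ?eqxx ?muln1 ?addn2 ?addn1 ?subr0.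
- by rewrite andbC; case: ifP => [/andP[/eqP-> /eqP->]|_];
    rewrite ?eqxx ?muln1 ?addn2 ?subr0 // h_sym.
- by rewrite subrr.
- by case: ifP => [/andP[/eqP-> _]|_]; rewrite ?oppr0.
- rewrite andbC; case: ifP => [/andP[/eqP-> /eqP->]|_];
    rewrite ?eqxx ?muln1 ?addn2 ?addn1 ?subr0 //.
  by rewrite h_sym (h_sym 2).
- by rewrite andbC; case: ifP => [/andP[/eqP-> _]|_]; rewrite ?oppr0 // h_sym.
Qed.

Lemma edge_sum_move :
  2%:R * move_gain h (deg e x) (0 < k).+1 l.+1 <= edge_sum h G1 - edge_sum h G2.
Proof.
rewrite !edge_sumE -sumrB -sum_move_corrections.
exact/ler_sum_fibers/move_corrections_le.
Qed.

Lemma edge_sum_move_lt :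
  0 < move_gain h (deg e x) (0 < k).+1 l.+1 -> edge_sum h G2 < edge_sum h G1.
Proof.
move=> gain_gt0; rewrite -subr_gt0; apply: lt_le_trans edge_sum_move.
by rewrite mulr_gt0 ?ltr0n.
Qed.

End EdgeMove.

Definition hso (R : rcfType) (a b : nat) : R := Num.sqrt (a%:R ^+ 2 + b%:R ^+ 2).
Definition hred (R : rcfType) (a b : nat) : R :=
  Num.sqrt ((a%:R - 1) ^+ 2 + (b%:R - 1) ^+ 2).
Arguments hso R (a b)%_N.
Arguments hred R (a b)%_N.

Lemma SO_edge_sum (R : rcfType) (T : finType) (G : rel T) :
  SO R G = edge_sum (hso R) G / 2%:R.
Proof. by []. Qed.

Lemma SOred_edge_sum (R : rcfType) (T : finType) (G : rel T) :
  SOred R G = edge_sum (hred R) G / 2%:R.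
Proof. by []. Qed.

Section SquareRootWeights.
Variable R : rcfType.

Lemma sqrt_add_lt (m n p q : nat) : (m + n <= p + q)%N -> (m * n < p * q)%N ->
  Num.sqrt m%:R + Num.sqrt n%:R < Num.sqrt p%:R + Num.sqrt q%:R :> R.
Proof.
move=> le_sum lt_prod.
rewrite -ltr_sqr ?qualifE /= ?addr_ge0 ?sqrtr_ge0 //.
rewrite !sqrrD !sqr_sqrtr ?ler0n // -!sqrtrM ?ler0n // -!natrM.
have : m%:R + n%:R <= p%:R + q%:R :> R by rewrite -!natrD ler_nat.
have : Num.sqrt (m * n)%:R < Num.sqrt (p * q)%:R :> R.
  by rewrite ltr_sqrt ?ltr0n ?ltr_nat // (leq_ltn_trans (leq0n _) lt_prod).
lra.
Qed.

Lemma hsoE (a b : nat) : hso R a b = Num.sqrt (a ^ 2 + b ^ 2)%:R.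
Proof. by rewrite /hso natrD !natrX. Qed.

Lemma hso_sym (a b : nat) : hso R a b = hso R b a.
Proof. by rewrite /hso addrC. Qed.

Lemma hso_le (a b c d : nat) :
  (a ^ 2 + b ^ 2 <= c ^ 2 + d ^ 2)%N -> hso R a b <= hso R c d.
Proof. by rewrite !hsoE ler_sqrt ?ler0n // ler_nat. Qed.

Lemma hso_lt (a b c d : nat) :
  (a ^ 2 + b ^ 2 < c ^ 2 + d ^ 2)%N -> hso R a b < hso R c d.
Proof.
move=> lt_ab_cd; rewrite !hsoE ltr_sqrt ?ltr0n ?ltr_nat //.
exact: leq_ltn_trans (leq0n _) lt_ab_cd.
Qed.

Lemma hso_mono (a a' b : nat) : (a <= a')%N -> hso R a b <= hso R a' b.
Proof. by move=> le_aa'; apply: hso_le; rewrite leq_add2r leq_exp2r. Qed.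

Lemma hso_add_lt (a1 b1 a2 b2 c1 d1 c2 d2 : nat) :
    (a1 ^ 2 + b1 ^ 2 + (a2 ^ 2 + b2 ^ 2) <= c1 ^ 2 + d1 ^ 2 + (c2 ^ 2 + d2 ^ 2))%N ->
    ((a1 ^ 2 + b1 ^ 2) * (a2 ^ 2 + b2 ^ 2) < (c1 ^ 2 + d1 ^ 2) * (c2 ^ 2 + d2 ^ 2))%N ->
  hso R a1 b1 + hso R a2 b2 < hso R c1 d1 + hso R c2 d2.
Proof. by rewrite !hsoE; apply: sqrt_add_lt. Qed.

Lemma hredE (a b : nat) : (0 < a)%N -> (0 < b)%N -> hred R a b = hso R a.-1 b.-1.
Proof.
by move=> a_gt0 b_gt0; rewrite /hred -(prednK a_gt0) -(prednK b_gt0) -!natr1 !addrK.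
Qed.

Lemma hred_sym (a b : nat) : hred R a b = hred R b a.
Proof. by rewrite /hred addrC. Qed.

Lemma hred_mono (a a' b : nat) : (0 < a)%N -> (a <= a')%N -> hred R a b <= hred R a' b.
Proof.
move=> a_gt0 le_aa'; rewrite /hred ler_sqrt ?addr_ge0 ?sqr_ge0 // lerD2r.
by rewrite ler_sqr ?qualifE /= ?subr_ge0 ?ler1n ?lerD2r ?ler_nat // (leq_trans a_gt0).
Qed.

Lemma move_gain_hso_gt0 (d b l : nat) : (0 < d)%N -> (0 < b <= 2)%N ->
  0 < move_gain (hso R) d b l.
Proof.
move=> d_gt0 /andP[b_gt0 b_le2]; rewrite /move_gain.
have : hso R b 2 < hso R d.+2 b by apply: hso_lt; nia.
case: ltnP => l_gt1 /=.
- have : hso R b 2 + hso R 2 2 < hso R d.+2 b + hso R 1 2 by apply: hso_add_lt; nia.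
  have : hso R d.+1 2 <= hso R d.+2 2 by apply: hso_mono.
  lra.
- have : hso R d.+1 2 <= hso R d.+2 1 by apply: hso_le; nia.
  lra.
Qed.

Lemma move_gain_hred_gt0 (d b l : nat) : (0 < d)%N -> (0 < b <= 2)%N ->
  0 < move_gain (hred R) d b l.
Proof.
move=> d_gt0 /andP[b_gt0 b_le2]; rewrite /move_gain !hredE //=.
have : hso R b.-1 1 < hso R d.+1 b.-1 by apply: hso_lt; nia.
case: ltnP => l_gt1 /=.
- have : hso R b.-1 1 + hso R 1 1 < hso R d.+1 b.-1 + hso R 0 1 by apply: hso_add_lt; nia.
  have : hso R d 1 <= hso R d.+1 1 by apply: hso_mono.
  lra.
- have : hso R d 1 <= hso R d.+1 0 by apply: hso_le; nia.
  lra.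
Qed.

End SquareRootWeights.

Theorem lemma2p3 (R : rcfType) (V : finType) (e : rel V) (x : V) (k l : nat)
  (e_sym : symmetric e) (e_irr : irreflexive e)
  (e_conn : forall a b : V, connect e a b)
  (hx : (deg e x == 1%N) || (deg e x == 2%N))
  (hk : (0 < k)%N) (hl : (0 < l)%N) :
  SO R (@G2rel V e x k l) < SO R (@G1rel V e x k l) /\
  SOred R (@G2rel V e x k l) < SOred R (@G1rel V e x k l).
Proof.
case: k hk => // k _; case: l hl => // l _.
have d_gt0 : (0 < deg e x)%N by case/orP: hx => /eqP ->.
have b_range : (0 < (0 < k).+1 <= 2)%N by case: (0 < k)%N.
rewrite !SO_edge_sum !SOred_edge_sum !ltr_pM2r ?invr_gt0 ?ltr0n //.
split; apply: edge_sum_move_lt.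
- exact: hso_sym.
- by move=> a a' b _; apply: hso_mono.
- exact: move_gain_hso_gt0.
- exact: hred_sym.
- exact: hred_mono.
- exact: move_gain_hred_gt0.
Qed.
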